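(* Let $\omega\colon\mathbf Z_+\to(0,+\infty)$ be a positive weight and let $T\colon\mathbf Z_+\to\mathbf Z_+$ be the modified Collatz map ($T(n)=n/2$ if $n$ is even, $T(n)=(3n+1)/2$ if $n$ is odd). Let $\mathcal X_\omega$ be the Hilbert space of holomorphic functions $f(z)=\sum_{n\ge 3}c_nz^n$ on the unit disk with $\|f\|_\omega^2=\sum_{n\ge3}|c_n|^2/\omega(n)<\infty$, and let $\mathcal T$ be defined on $\mathcal X_\omega$ by \[\mathcal T\sum_{n\ge3}c_nz^n=\sum_{j\ge 3,\ T(j)\ge 3}c_jz^{T(j)}\] (so the coefficient of $z^k$, $k\ge3$, in $\mathcal Tf$ is $\sum_{j\ge3,\,T(j)=k}c_j$). Then $\mathcal T$ is a bounded operator on $\mathcal X_\omega$ if and only if the three sequences $(\omega(6m)/\omega(3m))_{m\ge1}$, $(\omega(6m+2)/\omega(3m+1))_{m\ge1}$ and $((\omega(6m+4)+\omega(2m+1))/\omega(3m+2))_{m\ge1}$ are bounded. In this case \[\|\mathcal T\|_\omega^2=\max\Big\{\sup_{m\ge1}\tfrac{\omega(6m)}{\omega(3m)},\ \sup_{m\ge1}\tfrac{\omega(6m+2)}{\omega(3m+1)},\ \sup_{m\ge1}\tfrac{\omega(6m+4)+\omega(2m+1)}{\omega(3m+2)}\Big\},\] and moreover for every $n\ge0$, \[\|\mathcal T^n\|_\omega^2=\sup_{k\ge3}\sum_{j\ge3,\ T^n(j)=k}\frac{\omega(j)}{\omega(k)}.\] In particular, for $\omega=\omega_0$ with $\omega_0(n)=(n+1)/\pi$,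 $\mathcal T$ is bounded on $\mathcal X_{\omega_0}$ and $\|\mathcal T\|^2=8/3$.
   Context: $\mathcal X_\omega$ is the quotient of the weighted Bergman space $\mathcal B^2_\omega=\{\sum_{n\ge0}c_nz^n:\sum|c_n|^2/\omega(n)<\infty\}$ by $\mathrm{span}[1,z,z^2]$, identified with functions $\sum_{n\ge3}c_nz^n$; its inner product is $\langle f,g\rangle=\sum_{n\ge3}c_n(f)\overline{c_n(g)}/\omega(n)$. For $\omega_0(n)=(n+1)/\pi$, $\mathcal B^2_{\omega_0}$ is the classical Bergman space. *)

From HB Require Import structures.
From mathcomp Require Import all_boot all_order all_algebra.
From mathcomp Require Import all_classical all_reals all_analysis.
From mathcomp Require Import complex.
Set Implicit Arguments. Unset Strict Implicit. Unset Printing Implicit Defensive.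
Import Order.TTheory GRing.Theory Num.Theory.
Local Open Scope ring_scope.
Local Open Scope classical_set_scope.

Definition collatz (n : nat) : nat :=
  if odd n then (3 * n + 1)./2 else n./2.

(* An element of X_omega is represented by its coefficient sequence c : nat -> R[i],
   c n being the coefficient of z^n. *)

Definition normsq (R : realType) (w : nat -> R) (c : nat -> R[i]) : \bar R :=
  (\sum_(3 <= n <oo) ((Normc.normc (c n)) ^+ 2 / w n)%:E)%E.

Definition inX (R : realType) (w : nat -> R) (c : nat -> R[i]) : Prop :=
  (forall n, (n < 3)%N -> c n = 0) /\ (normsq w c < +oo)%E.

(* Since collatz j >= j/2, such j satisfy j <= 2k, so the sum is finite. *)
Definition Top (R : realType) (c : nat -> R[i]) : nat -> R[i] :=
  fun k => if (3 <= k)%N then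
             \sum_(j < (2 * k).+1 | (3 <= j)%N && (collatz j == k)) c j
           else 0.

Definition bounded_op (R : realType) (w : nat -> R)
    (A : (nat -> R[i]) -> (nat -> R[i])) : Prop :=
  (forall c, inX w c -> inX w (A c)) /\
  exists M : R, forall c, inX w c -> (normsq w (A c) <= M%:E * normsq w c)%E.

(* squared operator norm ||A||_omega^2 = inf { M >= 0 | ||A f||^2 <= M ||f||^2 for all f };
   equals +oo when A is unbounded *)
Definition opnormsq (R : realType) (w : nat -> R)
    (A : (nat -> R[i]) -> (nat -> R[i])) : \bar R :=
  ereal_inf [set M%:E | M in [set M : R | 0 <= M /\
     forall c, inX w c -> (normsq w (A c) <= M%:E * normsq w c)%E]].

Definition sup_m1 (R : realType) (u : nat -> R) : \bar R :=
  ereal_sup [set (u m)%:E | m in [set m : nat | (1 <= m)%N]].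

Definition bounded_seq1 (R : realType) (u : nat -> R) : Prop :=
  exists B : R, forall m, (1 <= m)%N -> `|u m| <= B.

Definition seq1 (R : realType) (w : nat -> R) (m : nat) : R :=
  w (6 * m)%N / w (3 * m)%N.
Definition seq2 (R : realType) (w : nat -> R) (m : nat) : R :=
  w (6 * m + 2)%N / w (3 * m + 1)%N.
Definition seq3 (R : realType) (w : nat -> R) (m : nat) : R :=
  (w (6 * m + 4)%N + w (2 * m + 1)%N) / w (3 * m + 2)%N.

(* sup_{k>=3} sum_{j>=3, T^n(j)=k} omega(j)/omega(k);
   T^n(j) = k forces j <= 2^n k, so the sum is finite. *)
Definition iter_sup (R : realType) (w : nat -> R) (n : nat) : \bar R :=
  ereal_sup [set (\sum_(j < (2 ^ n * k).+1 | (3 <= j)%N && (iter n collatz j == k))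
                     w j / w k)%:E
            | k in [set k : nat | (3 <= k)%N]].

Definition omega0 (R : realType) (n : nat) : R := (n.+1)%:R / pi.

(* By the weighted Cauchy-Schwarz inequality,
     |(T f)_k|^2 / w(k) <= r(k) * \sum_(T j = k) |c_j|^2 / w(j),
   where r(k) = \sum_(T j = k) w(j) / w(k); summing over k (fibres are disjoint)
   gives ||T f||^2 <= (sup_k r(k)) ||f||^2, and the test function
   f = \sum_(T j = k) w(j) z^j shows that sup_k r(k) is exactly ||T||^2.  This
   works for any map with finite fibres, in particular for T^n.  For the Collatz
   map the fibres of 3m, 3m+1 and 3m+2 (m >= 1) are {6m}, {6m+2} and
   {6m+4, 2m+1}, which yields the three sequences; for w = omega_0 they are
   (6m+1)/(3m+1), (6m+3)/(3m+2) and 8/3 - 1/(3m+3). *)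

From mathcomp Require Import all_boot all_order all_algebra.
From mathcomp Require Import all_classical all_reals all_analysis.
From mathcomp Require Import complex.
From mathcomp Require Import zify ring lra.
Import Order.TTheory GRing.Theory Num.Theory.
Set Implicit Arguments. Unset Strict Implicit. Unset Printing Implicit Defensive.
Local Open Scope ring_scope.

Lemma nneseries_le_of_partial_sums (R : realType) (f : nat -> R) (m0 : nat) (B : \bar R) :
  (forall n, 0 <= f n) ->
  (forall m, (\sum_(m0 <= n < m) (f n)%:E <= B)%E) ->
  (\sum_(m0 <= n <oo) (f n)%:E <= B)%E.
Proof.
move=> f_ge0 partial_le.
have nd : nondecreasing_seq (fun m => (\sum_(m0 <= n < m) (f n)%:E)%E).
  by apply: ereal_nondecreasing_series => n _ _; rewrite lee_fin.
rewrite (cvg_lim _ (ereal_nondecreasing_cvgn nd)) //.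
by apply: ge_ereal_sup => _ [m _ <-].
Qed.

Lemma sum_nat_widen_le (R : numDomainType) (F : nat -> R) (P : pred nat) m n1 n2 :
  (forall i, 0 <= F i) -> (n1 <= n2)%N ->
  \sum_(m <= i < n1 | P i) F i <= \sum_(m <= i < n2 | P i) F i.
Proof.
move=> F_ge0 n12; rewrite (big_nat_widen _ _ _ _ _ n12).
by rewrite [leRHS](bigID (fun i => (i < n1)%N)) /= lerDl sumr_ge0.
Qed.

Lemma weighted_cauchy_schwarz (R : realFieldType) (I : finType) (P : pred I)
    (x w : I -> R) :
  (forall i, 0 < w i) ->
  (\sum_(i | P i) x i) ^+ 2 <= (\sum_(i | P i) w i) * \sum_(i | P i) x i ^+ 2 / w i.
Proof.
move=> w_pos; set X := \sum_(i | P i) x i; set W := \sum_(i | P i) w i.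
set Q := \sum_(i | P i) _.
have [W_gt0 | W_le0] := ltP 0 W; last first.
  have W0 : W = 0 by apply/eqP; rewrite eq_le W_le0 sumr_ge0 // => i _; exact: ltW.
  have noP i : P i -> False.
    by move=> /(psumr_eq0P (fun i _ => ltW (w_pos i)) W0) wi0; move: (w_pos i); rewrite wi0 ltxx.
  by rewrite /X big1 ?expr0n ?W0 ?mul0r // => i /noP.
(* Sum (x_i - t w_i)^2 / w_i >= 0 over i, with t = X / W. *)
pose t := X / W.
have term_le i : 2 * t * x i - t ^+ 2 * w i <= x i ^+ 2 / w i.
  have wi := w_pos i.
  rewrite -subr_ge0 (_ : _ - _ = (x i - t * w i) ^+ 2 / w i); last by field; exact: lt0r_neq0.
  by rewrite divr_ge0 ?sqr_ge0 ?ltW.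
have : \sum_(i | P i) (2 * t * x i - t ^+ 2 * w i) <= Q.
  by apply: ler_sum => i _; exact: term_le.
rewrite sumrB -!mulr_sumr -/X -/W -/Q.
rewrite (_ : _ - _ = X ^+ 2 / W); last by rewrite /t; field; exact: lt0r_neq0.
by rewrite ler_pdivrMr // mulrC.
Qed.

Lemma normc_sum_le (R : realType) (I : finType) (P : pred I) (c : I -> R[i]) :
  Normc.normc (\sum_(i | P i) c i) <= \sum_(i | P i) Normc.normc (c i).
Proof. exact: (@ler_norm_sum _ (Rcomplex R)). Qed.

Lemma normc_ge0 (R : realType) (z : R[i]) : 0 <= Normc.normc z.
Proof. exact: (@normr_ge0 _ (Rcomplex R)). Qed.

Lemma normc_real (R : realType) (x : R) : 0 <= x -> Normc.normc (x%:C)%C = x.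
Proof. by move=> x_ge0; rewrite /Normc.normc /= expr0n /= addr0 sqrtr_sqr ger0_norm. Qed.

(* The fibre of [k] is summed over [j < N k]; the hypotheses [j < N (phi j)]
   required below make sure that this truncation loses nothing. *)
Definition fibre_sum (V : zmodType) (phi N : nat -> nat) (F : nat -> V) (k : nat) : V :=
  \sum_(j < N k | (3 <= j)%N && (phi j == k)) F j.

Definition transfer_op (R : realType) (phi N : nat -> nat) (c : nat -> R[i]) (k : nat) :
    R[i] :=
  if (3 <= k)%N then fibre_sum phi N c k else 0.

Definition fibre_ratio (R : realType) (w : nat -> R) (phi N : nat -> nat) (k : nat) : R :=
  fibre_sum phi N (fun j => w j / w k) k.

Definition fibre_sup (R : realType) (w : nat -> R) (phi N : nat -> nat) : \bar R :=
  ereal_sup [set (fibre_ratio w phi N k)%:E | k in [set k : nat | (3 <= k)%N]].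

Lemma fibre_sum_nat (V : zmodType) (phi N : nat -> nat) (F : nat -> V) k m :
  (forall j, (3 <= j)%N -> (j < N (phi j))%N) -> (N k <= m)%N ->
  fibre_sum phi N F k = \sum_(3 <= j < m | phi j == k) F j.
Proof.
move=> fibre_lt Nkm; rewrite /fibre_sum -(big_mkord (fun j => (3 <= j)%N && (phi j == k))).
rewrite (big_nat_widen _ _ _ _ _ Nkm) (@big_nat_widenl _ _ _ 3 0 m _ _ (leq0n 3)).
apply: eq_bigl => j; rewrite andbC; case: (boolP (3 <= j)%N) => [j3|]; last by rewrite !andbF.
by rewrite andbT; case: eqP => [<-|_]; rewrite ?fibre_lt ?andbF.
Qed.

Lemma transfer_op_id (R : realType) (N : nat -> nat) (c : nat -> R[i]) :
  (forall k, (k < N k)%N) -> (forall j, (j < 3)%N -> c j = 0) ->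
  transfer_op id N c = c.
Proof.
move=> k_lt c_small; apply: funext => k; rewrite /transfer_op /fibre_sum.
have [k3 | k_lt3] := leqP 3 k; last by rewrite c_small.
by rewrite big_ord1_cond_eq k_lt k3.
Qed.

(* [transfer_op psi] discards the coefficients it sends below degree 3; the last
   hypothesis says that [phi] would not have sent them to degree >= 3 either. *)
Lemma transfer_op_comp (R : realType) (phi Nphi psi Npsi N : nat -> nat) (c : nat -> R[i]) :
  (forall j, (3 <= j)%N -> (j < Nphi (phi j))%N) ->
  (forall i, (3 <= i)%N -> (i < Npsi (psi i))%N) ->
  (forall i, (3 <= i)%N -> (i < N (phi (psi i)))%N) ->
  (forall j, (3 <= j)%N -> (Npsi j <= N (phi j))%N) ->
  (forall j, (3 <= phi j)%N -> (3 <= j)%N) ->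
  transfer_op phi Nphi (transfer_op psi Npsi c) = transfer_op (phi \o psi) N c.
Proof.
move=> phi_lt psi_lt comp_lt N_ge phi_ge3; apply: funext => k; rewrite /transfer_op.
case: leqP => // k3.
rewrite (fibre_sum_nat _ phi_lt (leqnn _)) (fibre_sum_nat _ comp_lt (leqnn _)) big_nat_cond.
rewrite (eq_bigr (fun j => \sum_(3 <= i < N k) if psi i == j then c i else 0)); last first.
  move=> j /andP[/andP[j3 _] /eqP <-].
  by rewrite j3 (fibre_sum_nat _ psi_lt (N_ge _ j3)) big_mkcond.
rewrite -big_nat_cond exchange_big_nat [RHS]big_mkcond; apply: eq_big_nat => i _ /=.
rewrite -big_mkcondr (eq_bigl (fun j => (phi j == k) && (j == psi i))) => [|j]; last first.
  by rewrite (eq_sym (psi i)).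
rewrite (big_nat1_cond_eq _ (fun=> c i)); case: eqP => [phik | _]; last by rewrite andbF.
have psi3 : (3 <= psi i)%N by apply: phi_ge3; rewrite phik.
by rewrite psi3 -phik phi_lt.
Qed.

Section TransferOp.
Variables (phi N : nat -> nat).
Hypothesis fibre_lt : forall j, (3 <= j)%N -> (j < N (phi j))%N.

Lemma sum_fibre_sum_le (R : numDomainType) (a : nat -> R) m : (forall j, 0 <= a j) ->
  \sum_(3 <= k < m) fibre_sum phi N a k <= \sum_(3 <= j < \max_(k < m) N k) a j.
Proof.
move=> a_ge0; set J := (\max_(k < m) N k)%N.
rewrite big_nat_cond (eq_bigr (fun k => \sum_(3 <= j < J) if phi j == k then a j else 0));
  last first.
  move=> k /andP[/andP[_ km] _].
  have NkJ : (N k <= J)%N by exact: (leq_bigmax (Ordinal km)).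
  by rewrite (fibre_sum_nat _ fibre_lt NkJ) big_mkcond.
rewrite -big_nat_cond exchange_big_nat /=; apply: ler_sum_nat => j _.
rewrite -big_mkcond /= (eq_bigl (fun k => k == phi j)) => [|k]; last exact: eq_sym.
by rewrite big_nat1_eq; case: ifP.
Qed.

Variables (R : realType) (w : nat -> R).
Hypothesis w_pos : forall n, 0 < w n.

Lemma normsq_ge0 (c : nat -> R[i]) : (0 <= normsq w c)%E.
Proof. by apply: nneseries_ge0 => n _ _; rewrite lee_fin divr_ge0 ?sqr_ge0 ?ltW. Qed.

Lemma fibre_ratio_ge0 k : 0 <= fibre_ratio w phi N k.
Proof. by apply: sumr_ge0 => j _; rewrite divr_ge0 ?ltW. Qed.

Lemma fibre_ratioE k : fibre_ratio w phi N k = fibre_sum phi N w k / w k.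
Proof. by rewrite /fibre_ratio /fibre_sum mulr_suml. Qed.

Lemma transfer_op_coef_le (c : nat -> R[i]) k : (3 <= k)%N ->
  Normc.normc (transfer_op phi N c k) ^+ 2 / w k <=
  fibre_ratio w phi N k * fibre_sum phi N (fun j => Normc.normc (c j) ^+ 2 / w j) k.
Proof.
move=> k3; rewrite /transfer_op k3 fibre_ratioE [_ / w k * _]mulrAC.
rewrite ler_wpM2r ?invr_ge0 ?(ltW (w_pos k)) //.
set P := fun j : 'I_(N k) => (3 <= j)%N && (phi j == k).
have := weighted_cauchy_schwarz P (fun j => Normc.normc (c j)) (fun j => w_pos j).
apply: le_trans; rewrite lerXn2r ?nnegrE ?normc_ge0 //; last exact: normc_sum_le.
by rewrite sumr_ge0 // => j _; exact: normc_ge0.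
Qed.

Lemma normsq_transfer_op_le (S : R) (c : nat -> R[i]) :
  0 <= S -> (forall k, (3 <= k)%N -> fibre_ratio w phi N k <= S) ->
  (normsq w (transfer_op phi N c) <= S%:E * normsq w c)%E.
Proof.
move=> S_ge0 ratio_le; pose a j := Normc.normc (c j) ^+ 2 / w j.
have a_ge0 j : 0 <= a j by rewrite divr_ge0 ?sqr_ge0 ?ltW.
apply: nneseries_le_of_partial_sums => [n|m]; first by rewrite divr_ge0 ?sqr_ge0 ?ltW.
have partial_le : \sum_(3 <= k < m) Normc.normc (transfer_op phi N c k) ^+ 2 / w k <=
    S * \sum_(3 <= j < \max_(k < m) N k) a j.
  apply: le_trans (ler_wpM2l S_ge0 (sum_fibre_sum_le m a_ge0)).
  rewrite mulr_sumr; apply: ler_sum_nat => k /andP[k3 _].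
  apply: (le_trans (transfer_op_coef_le c k3)).
  apply: ler_wpM2r; last exact: ratio_le.
  by apply: sumr_ge0 => j _; exact: a_ge0.
rewrite (@sumEFin R); apply: (le_trans (y := (S * _)%:E)).
  by rewrite lee_fin; exact: partial_le.
rewrite EFinM lee_wpmul2l ?lee_fin // -sumEFin.
by apply: nneseries_lim_ge => n _ _; rewrite lee_fin.
Qed.

Lemma coef_le_normsq (c : nat -> R[i]) k : (3 <= k)%N ->
  ((Normc.normc (c k) ^+ 2 / w k)%:E <= normsq w c)%E.
Proof.
move=> k3; apply: le_trans (nneseries_lim_ge k.+1 _); last first.
  by move=> n _ _; rewrite lee_fin divr_ge0 ?sqr_ge0 ?ltW.
rewrite (@sumEFin R) lee_fin big_nat_recr //= lerDr.
by rewrite sumr_ge0 // => n _; rewrite divr_ge0 ?sqr_ge0 ?ltW.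
Qed.

(* The test function f = \sum_(phi j = k) w(j) z^j, for which both ||f||^2 and
   the coefficient of z^k in [transfer_op phi N f] equal \sum_(phi j = k) w(j). *)
Definition fibre_weight (k j : nat) : R[i] :=
  if (3 <= j)%N && (phi j == k) then ((w j)%:C)%C else 0.

Lemma fibre_weight_termE k j : Normc.normc (fibre_weight k j) ^+ 2 / w j =
  if (3 <= j)%N && (phi j == k) then w j else 0.
Proof.
rewrite /fibre_weight; case: ifP => _; last by rewrite Normc.normc0 expr0n mul0r.
by rewrite normc_real ?ltW // expr2 mulfK // gt_eqF.
Qed.

Lemma normsq_fibre_weight_le k : (normsq w (fibre_weight k) <= (fibre_sum phi N w k)%:E)%E.
Proof.
apply: nneseries_le_of_partial_sums => [n|m].
  by rewrite fibre_weight_termE; case: ifP => // _; exact: ltW.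
rewrite (@sumEFin R) lee_fin (fibre_sum_nat _ fibre_lt (leq_maxr m (N k))).
apply: le_trans (sum_nat_widen_le _ _ (fun j => ltW (w_pos j)) (leq_maxl m (N k))).
rewrite [leRHS]big_mkcond; apply: ler_sum_nat => j /andP[j3 _].
by rewrite fibre_weight_termE j3.
Qed.

Lemma fibre_weight_inX k : inX w (fibre_weight k).
Proof.
split; first by move=> n n3; rewrite /fibre_weight leqNgt n3.
exact: le_lt_trans (normsq_fibre_weight_le k) (ltry _).
Qed.

Lemma transfer_op_fibre_weight k : (3 <= k)%N ->
  transfer_op phi N (fibre_weight k) k = ((fibre_sum phi N w k)%:C)%C.
Proof.
move=> k3; rewrite /transfer_op k3 /fibre_sum rmorph_sum.
by apply: eq_bigr => j Pj; rewrite /fibre_weight Pj.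
Qed.

Lemma fibre_ratio_le_opbound (M : R) k : 0 <= M -> (3 <= k)%N ->
  (forall c, inX w c -> (normsq w (transfer_op phi N c) <= M%:E * normsq w c)%E) ->
  fibre_ratio w phi N k <= M.
Proof.
move=> M_ge0 k3 bound; set W := fibre_sum phi N w k.
have W_ge0 : 0 <= W by apply: sumr_ge0 => j _; exact: ltW.
have : ((W ^+ 2 / w k)%:E <= (M * W)%:E)%E.
  have := coef_le_normsq (transfer_op phi N (fibre_weight k)) k3.
  rewrite transfer_op_fibre_weight // normc_real // => /le_trans; apply.
  apply: le_trans (bound _ (fibre_weight_inX k)) _.
  by rewrite EFinM lee_wpmul2l ?lee_fin // normsq_fibre_weight_le.
rewrite lee_fin fibre_ratioE -/W.
have [W_gt0 | W_le0] := ltP 0 W; last first.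
  have -> : W = 0 by apply: le_anti; rewrite W_le0 W_ge0.
  by rewrite mul0r.
by rewrite expr2 mulrAC ler_pM2r.
Qed.

Lemma bounded_transfer_opP (A : (nat -> R[i]) -> nat -> R[i]) :
  (forall c, inX w c -> A c = transfer_op phi N c) ->
  bounded_op w A <-> exists B : R, forall k, (3 <= k)%N -> fibre_ratio w phi N k <= B.
Proof.
move=> AE; split.
  move=> [_ [M bound]]; exists (Num.max M 0) => k k3.
  apply: fibre_ratio_le_opbound; rewrite ?le_max ?lexx ?orbT // => c c_in.
  rewrite -AE //; apply: le_trans (bound c c_in) _.
  by rewrite lee_wpmul2r ?normsq_ge0 // lee_fin le_max lexx.
move=> [B ratio_le]; set B' := Num.max B 0.
have bound c : inX w c -> (normsq w (A c) <= B'%:E * normsq w c)%E.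
  move=> c_in; rewrite AE //; apply: normsq_transfer_op_le; first by rewrite le_max lexx orbT.
  by move=> k k3; apply: le_trans (ratio_le k k3) _; rewrite le_max lexx.
split; last by exists B'.
move=> c c_in; split.
  by move=> n n3; rewrite AE // /transfer_op leqNgt n3.
apply: le_lt_trans (bound c c_in) _.
have c_fin : normsq w c \is a fin_num by rewrite ge0_fin_numE ?normsq_ge0 //; case: c_in.
by rewrite -(fineK c_fin) -EFinM ltry.
Qed.

Lemma opnormsq_transfer_op (A : (nat -> R[i]) -> nat -> R[i]) :
  (forall c, inX w c -> A c = transfer_op phi N c) ->
  opnormsq w A = fibre_sup w phi N.
Proof.
move=> AE; apply/eqP; rewrite eq_le; apply/andP; split; last first.
  apply: le_ereal_inf_tmp => _ [M [M_ge0 bound] <-].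
  apply: ge_ereal_sup => _ [k k3 <-]; rewrite lee_fin.
  by apply: fibre_ratio_le_opbound => // c c_in; rewrite -AE //; exact: bound.
have ratio_le_sup k : (3 <= k)%N -> ((fibre_ratio w phi N k)%:E <= fibre_sup w phi N)%E.
  by move=> k3; apply: ereal_sup_ubound; exists k.
have sup_ge0 : (0 <= fibre_sup w phi N)%E.
  by apply: le_trans (ratio_le_sup 3%N isT); rewrite lee_fin fibre_ratio_ge0.
case: (fibre_sup w phi N) sup_ge0 ratio_le_sup => [r| |] // r_ge0 ratio_le; last exact: leey.
apply: ereal_inf_lbound; exists r => //; split => // c c_in.
by rewrite AE //; apply: normsq_transfer_op_le => // k k3; rewrite -lee_fin ratio_le.
Qed.
End TransferOp.

Lemma collatz_ge_half j : (j <= 2 * collatz j)%N.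
Proof. by rewrite /collatz; have := odd_double_half j; case: (odd j) => /= h; lia. Qed.

Lemma collatz_lt j : (3 <= j)%N -> (j < (2 * collatz j).+1)%N.
Proof. by move=> _; rewrite ltnS collatz_ge_half. Qed.

Lemma collatz_ge3 j : (3 <= collatz j)%N -> (3 <= j)%N.
Proof. by case: j => [|[|[|j]]]. Qed.

Lemma iter_collatz_ge n j : (j <= 2 ^ n * iter n collatz j)%N.
Proof.
elim: n => [|n IH]; first by rewrite mul1n.
rewrite expnSr -mulnA; apply: leq_trans IH _.
by rewrite leq_mul2l collatz_ge_half orbT.
Qed.

Lemma iter_Top (R : realType) n (c : nat -> R[i]) : (forall j, (j < 3)%N -> c j = 0) ->
  iter n (@Top R) c = transfer_op (iter n collatz) (fun k => (2 ^ n * k).+1) c.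
Proof.
move=> c_small; elim: n => [|n IH]; first by rewrite transfer_op_id // => k; rewrite mul1n.
rewrite iterS IH; apply: (@transfer_op_comp R collatz (fun k => (2 * k).+1)).
- exact: collatz_lt.
- by move=> i _; rewrite ltnS iter_collatz_ge.
- by move=> i _; rewrite ltnS (iter_collatz_ge n.+1).
- by move=> j _; rewrite ltnS expnSr -mulnA leq_mul2l collatz_ge_half orbT.
- exact: collatz_ge3.
Qed.

Lemma collatz_fibre_3m j m : (1 <= m)%N ->
  ((3 <= j) && (collatz j == 3 * m))%N = (j == 6 * m)%N.
Proof.
by rewrite /collatz; have := odd_double_half j; case: (odd j) => /= h m1; apply/idP/idP; lia.
Qed.

Lemma collatz_fibre_3m1 j m : (1 <= m)%N ->
  ((3 <= j) && (collatz j == 3 * m + 1))%N = (j == 6 * m + 2)%N.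
Proof.
by rewrite /collatz; have := odd_double_half j; case: (odd j) => /= h m1; apply/idP/idP; lia.
Qed.

Lemma collatz_fibre_3m2 j m : (1 <= m)%N ->
  ((3 <= j) && (collatz j == 3 * m + 2))%N = ((j == 6 * m + 4) || (j == 2 * m + 1))%N.
Proof.
by rewrite /collatz; have := odd_double_half j; case: (odd j) => /= h m1; apply/idP/idP; lia.
Qed.

Lemma big_ord_pred2 (V : zmodType) n (a b : nat) (F : nat -> V) : a != b ->
  \sum_(j < n | (j == a :> nat) || (j == b :> nat)) F j =
  \sum_(j < n | j == a :> nat) F j + \sum_(j < n | j == b :> nat) F j.
Proof.
move=> ab; rewrite (bigID (fun j : 'I_n => (j : nat) == a)) /=.
congr (_ + _); apply: eq_bigl => j; case: (eqVneq (j : nat) a) => [->|_] /=;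
  by rewrite ?andbF ?andbT // (negbTE ab).
Qed.

Section CollatzFibres.
Variables (R : realType) (w : nat -> R) (m : nat).
Hypothesis m_ge1 : (1 <= m)%N.
Local Notation ratio := (fibre_ratio w collatz (fun k => (2 * k).+1)).

Lemma fibre_ratio_collatz_3m : ratio (3 * m)%N = seq1 w m.
Proof.
rewrite /fibre_ratio /fibre_sum (eq_bigl _ _ (fun j : 'I_ _ => collatz_fibre_3m j m_ge1)).
by rewrite (big_ord1_eq _ (fun j => w j / w (3 * m)%N)) ifT //; lia.
Qed.

Lemma fibre_ratio_collatz_3m1 : ratio (3 * m + 1)%N = seq2 w m.
Proof.
rewrite /fibre_ratio /fibre_sum (eq_bigl _ _ (fun j : 'I_ _ => collatz_fibre_3m1 j m_ge1)).
by rewrite (big_ord1_eq _ (fun j => w j / w (3 * m + 1)%N)) ifT //; lia.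
Qed.

Lemma fibre_ratio_collatz_3m2 : ratio (3 * m + 2)%N = seq3 w m.
Proof.
rewrite /fibre_ratio /fibre_sum (eq_bigl _ _ (fun j : 'I_ _ => collatz_fibre_3m2 j m_ge1)).
set F := fun j => w j / w (3 * m + 2)%N.
rewrite (big_ord_pred2 _ F); last by apply/eqP; lia.
by rewrite !(big_ord1_eq _ F) /F /seq3 mulrDl !ifT //; lia.
Qed.
End CollatzFibres.

Section CollatzOperator.
Variables (R : realType) (w : nat -> R).
Hypothesis w_pos : forall n, 0 < w n.
Local Notation ratio := (fibre_ratio w collatz (fun k => (2 * k).+1)).

Lemma fibre_ratio_collatz_cases k : (3 <= k)%N ->
  exists2 m, (1 <= m)%N &
    [\/ ratio k = seq1 w m, ratio k = seq2 w m | ratio k = seq3 w m].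
Proof.
move=> k3; set m := (k %/ 3)%N; have m1 : (1 <= m)%N by rewrite /m; lia.
exists m => //; have := divn_eq k 3; have := ltn_pmod k (isT : (0 < 3)%N); rewrite -/m.
case: (k %% 3)%N => [|[|[|//]]] _ ->; rewrite mulnC.
- by apply: Or31; rewrite addn0 fibre_ratio_collatz_3m.
- by apply: Or32; rewrite fibre_ratio_collatz_3m1.
- by apply: Or33; rewrite fibre_ratio_collatz_3m2.
Qed.

Lemma bounded_Top_iff : bounded_op w (@Top R) <->
  [/\ bounded_seq1 (seq1 w), bounded_seq1 (seq2 w) & bounded_seq1 (seq3 w)].
Proof.
rewrite (@bounded_transfer_opP collatz _ collatz_lt _ _ w_pos (@Top R) (fun c _ => erefl)).
have ratio_ge0 k := fibre_ratio_ge0 collatz (fun k => (2 * k).+1) w_pos k.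
split.
  move=> [B ratio_le]; split; exists B => m m1.
  - by rewrite -fibre_ratio_collatz_3m // ger0_norm ?ratio_le //; lia.
  - by rewrite -fibre_ratio_collatz_3m1 // ger0_norm ?ratio_le //; lia.
  - by rewrite -fibre_ratio_collatz_3m2 // ger0_norm ?ratio_le //; lia.
move=> [[B1 le_B1] [B2 le_B2] [B3 le_B3]]; exists (Num.max B1 (Num.max B2 B3)) => k k3.
have [m m1 [->|->|->]] := fibre_ratio_collatz_cases k3; apply: le_trans (ler_norm _) _.
- by apply: le_trans (le_B1 m m1) _; rewrite !le_max lexx.
- by apply: le_trans (le_B2 m m1) _; rewrite !le_max lexx orbT.
- by apply: le_trans (le_B3 m m1) _; rewrite !le_max lexx !orbT.
Qed.

Lemma opnormsq_Top : opnormsq w (@Top R) =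
  maxe (maxe (sup_m1 (seq1 w)) (sup_m1 (seq2 w))) (sup_m1 (seq3 w)).
Proof.
rewrite (@opnormsq_transfer_op collatz _ collatz_lt _ _ w_pos (@Top R) (fun c _ => erefl)).
apply/eqP; rewrite eq_le; apply/andP; split.
  apply: ge_ereal_sup => _ [k k3 <-].
  have [m m1 [->|->|->]] := fibre_ratio_collatz_cases k3; rewrite !le_max.
  - by apply/orP; left; apply/orP; left; apply: ereal_sup_ubound; exists m.
  - by apply/orP; left; apply/orP; right; apply: ereal_sup_ubound; exists m.
  - by apply/orP; right; apply: ereal_sup_ubound; exists m.
rewrite !ge_max -!andbA; apply/and3P; split;
  apply: ge_ereal_sup => _ [m /= m1 <-]; apply: ereal_sup_ubound.
- by exists (3 * m)%N; [rewrite /=; lia | rewrite fibre_ratio_collatz_3m].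
- by exists (3 * m + 1)%N; [rewrite /=; lia | rewrite fibre_ratio_collatz_3m1].
- by exists (3 * m + 2)%N; [rewrite /=; lia | rewrite fibre_ratio_collatz_3m2].
Qed.

Lemma opnormsq_iter_Top n : opnormsq w (iter n (@Top R)) = iter_sup w n.
Proof.
have iter_collatz_lt j : (3 <= j)%N -> (j < (2 ^ n * iter n collatz j).+1)%N.
  by move=> _; rewrite ltnS iter_collatz_ge.
rewrite (@opnormsq_transfer_op _ (fun k => (2 ^ n * k).+1) iter_collatz_lt _ _ w_pos) //.
by move=> c [c_small _]; exact: iter_Top.
Qed.
End CollatzOperator.

Section Bergman.
Variable R : realType.
Local Notation w := (@omega0 R).

Lemma omega0_gt0 n : 0 < w n.
Proof. by rewrite divr_gt0 // pi_gt0. Qed.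

Lemma omega0_div a b : w a / w b = (a%:R + 1) / (b%:R + 1).
Proof. by rewrite /omega0 invf_div mulrA divfK ?gt_eqF ?pi_gt0 // !natr1. Qed.

Lemma natr_affine a b m : (a * m + b)%:R = a%:R * m%:R + b%:R :> R.
Proof. by rewrite natrD natrM. Qed.

Lemma seq1_omega0 m : seq1 w m = (6 * m%:R + 1) / (3 * m%:R + 1).
Proof. by rewrite /seq1 omega0_div !(natrM R). Qed.

Lemma seq2_omega0 m : seq2 w m = (6 * m%:R + 3) / (3 * m%:R + 2).
Proof. by rewrite /seq2 omega0_div !natr_affine -!addrA. Qed.

Lemma seq3_omega0 m : seq3 w m = 8 / 3 - (3 * m%:R + 3)^-1.
Proof.
rewrite /seq3 mulrDl !omega0_div !natr_affine.
have m_ge0 : 0 <= m%:R :> R by [].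
by field; lra.
Qed.

Lemma omega0_seq_bounds m :
  [/\ 0 <= seq1 w m <= 8 / 3, 0 <= seq2 w m <= 8 / 3 & 0 <= seq3 w m <= 8 / 3].
Proof.
have m_ge0 : 0 <= m%:R :> R by [].
rewrite seq1_omega0 seq2_omega0 seq3_omega0 !divr_ge0 ?ler_pdivrMr /=; try lra.
have inv_ge0 : 0 <= (3 * m%:R + 3)^-1 :> R by rewrite invr_ge0; lra.
have inv_le : (3 * m%:R + 3)^-1 <= 3^-1 :> R by rewrite lef_pV2 ?posrE; lra.
by split; lra.
Qed.

Lemma sup_m1_seq3_omega0 : sup_m1 (seq3 w) = (8 / 3 : R)%:E.
Proof.
apply/eqP; rewrite eq_le; apply/andP; split.
  apply: ge_ereal_sup => _ [m _ <-]; rewrite lee_fin.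
  by case: (omega0_seq_bounds m) => _ _ /andP[].
apply/lee_addgt0Pr => e e_gt0.
have [k] := ltr_add_invr e_gt0; rewrite add0r => k_inv_lt.
have le_sup : ((seq3 w k.+1)%:E <= sup_m1 (seq3 w))%E by apply: ereal_sup_ubound; exists k.+1.
apply: le_trans (leeD2r _ le_sup); rewrite -EFinD lee_fin seq3_omega0.
have k_gt0 : 0 < k.+1%:R :> R by rewrite ltr0Sn.
have inv_le : (3 * k.+1%:R + 3)^-1 <= k.+1%:R^-1 :> R by rewrite lef_pV2 ?posrE; lra.
by rewrite -addrA lerDl addrC subr_ge0 (le_trans inv_le) ?ltW.
Qed.

Lemma bounded_Top_omega0 : bounded_op w (@Top R).
Proof.
apply/(bounded_Top_iff omega0_gt0).
have bounded (u : nat -> R) : (forall m, 0 <= u m <= 8 / 3) -> bounded_seq1 u.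
  by move=> u_in; exists (8 / 3) => m _; have /andP[u_ge0 u_le] := u_in m; rewrite ger0_norm.
by split; apply: bounded => m; case: (omega0_seq_bounds m).
Qed.

Lemma opnormsq_Top_omega0 : opnormsq w (@Top R) = (8 / 3 : R)%:E.
Proof.
rewrite (opnormsq_Top omega0_gt0) sup_m1_seq3_omega0; apply/max_idPr.
rewrite ge_max; apply/andP; split; apply: ge_ereal_sup => _ [m _ <-]; rewrite lee_fin;
  by case: (omega0_seq_bounds m) => /andP[_ ?] /andP[_ ?].
Qed.
End Bergman.

Theorem proposition2p1 (R : realType) (w : nat -> R) (w_pos : forall n, 0 < w n) :
  (bounded_op w (@Top R) <->
     [/\ bounded_seq1 (seq1 w), bounded_seq1 (seq2 w) & bounded_seq1 (seq3 w)]) /\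
  (bounded_op w (@Top R) ->
     opnormsq w (@Top R) =
       maxe (maxe (sup_m1 (seq1 w)) (sup_m1 (seq2 w))) (sup_m1 (seq3 w)) /\
     forall n : nat, opnormsq w (iter n (@Top R)) = iter_sup w n) /\
  (bounded_op (@omega0 R) (@Top R) /\
   opnormsq (@omega0 R) (@Top R) = (8 / 3 : R)%:E).
Proof.
split; first exact: bounded_Top_iff.
split; first by move=> _; split; [exact: opnormsq_Top | exact: opnormsq_iter_Top].
by split; [exact: bounded_Top_omega0 | exact: opnormsq_Top_omega0].
Qed.
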